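(* Let $\mu$ be a cylindric partition on $\mathcal C_{k,n}$ and $t$ a nonnegative integer. There is a bijection between marble games of length $t$ with initial arrangement $\operatorname{Arr}(\mu)$ and semistandard cylindric tableaux with inner shape $\mu$ (and arbitrary outer shape) whose entries lie in $\{1,2,\dots,t\}$.
   Context: Fix integers $n>k\ge1$. A cylindric partition is a weakly decreasing integer sequence $(\lambda_m)_{m\in\mathbb Z}$ with $\lambda_m=\lambda_{m+k}+n-k$. A point $(x,y)\in\mathbb Z^2$ lies in $\lambda$ if $y\le\lambda_x$. Boxes are classes of points modulo translation by multiples of $(-k,n-k)$; $\pi$ the projection. $\mu\subseteq\lambda$ means $\mu_m\le\lambda_m$ for all $m$. A semistandard cylindric tableau of shape $\lambda/\mu$ (with $\mu\subseteq\lambda$) is a map $R$ from the boxes in $\lambda$ but not $\mu$ to a totally ordered set with $R(\pi(x,y_1))\le R(\pi(x,y_2))$ whenever $(x,y_1),(x,y_2)$ lie in $\lambda$ but not $\mu$ and $y_1<y_2$, and $R(\pi(x_1,y))<R(\pi(x_2,y))$ whenever $(x_1,y),(x_2,y)$ lie in $\lambda$ but not $\mu$ and $x_1<x_2$; $\mu$ is its inner shape. Marble games: there are $k$ people $p_0,\dots,p_{k-1}$ in a circle, indices taken mod $k$, with $p_{i+1}$ the clockwise neighbour of $p_i$. For a cylindric partition $\alpha$, the arrangement $\operatorname{Arr}(\alpha)$ gives $p_i$ exactly $\alpha_{i-1}-\alpha_i$ marbles (a total of $n-k$ marbles). A turn is a tuple $(a_0,\dots,a_{k-1})$ of nonnegative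 integers, applied to an arrangement, in which simultaneously each $p_i$ passes $a_i$ marbles to $p_{i+1}$, where $a_i$ is at most the number of marbles $p_i$ has before the turn. A marble game of length $t$ is an initial arrangement of the $n-k$ marbles among the $k$ people together with a sequence of $t$ successive (valid) turns. *)

From mathcomp Require Import all_boot all_order all_algebra.
Set Implicit Arguments. Unset Strict Implicit. Unset Printing Implicit Defensive.
Import Order.TTheory GRing.Theory Num.Theory.
Local Open Scope ring_scope.

Definition cylindric (n k : nat) (lam : int -> int) : Prop :=
  (forall m : int, lam (m + 1) <= lam m) /\
  (forall m : int, lam m = lam (m + k%:Z) + (n%:Z - k%:Z)).

Definition subpart (mu lam : int -> int) : Prop := forall m : int, mu m <= lam m.

Definition in_skew (lam mu : int -> int) (x y : int) : bool :=
  (y <= lam x) && ~~ (y <= mu x).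

(* A map on boxes (classes of points modulo translation by (-k, n-k)) is encoded
   as a function on points R : Z -> Z -> nat invariant under that translation;
   to make the encoding canonical, R is required to be 0 outside lam/mu. *)
Definition ssct (n k : nat) (lam mu : int -> int) (t : nat)
    (R : int -> int -> nat) : Prop :=
  [/\ (forall x y : int, R (x - k%:Z) (y + (n%:Z - k%:Z)) = R x y),
      (forall x y : int, ~~ in_skew lam mu x y -> R x y = 0%N),
      (forall x y : int, in_skew lam mu x y -> (1 <= R x y <= t)%N),
      (forall x y1 y2 : int, in_skew lam mu x y1 -> in_skew lam mu x y2 ->
          y1 < y2 -> (R x y1 <= R x y2)%N) &
      (forall x1 x2 y : int, in_skew lam mu x1 y -> in_skew lam mu x2 y ->
          x1 < x2 -> (R x1 y < R x2 y)%N)].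

Record tableau (n k : nat) (mu : int -> int) (t : nat) := Tableau {
  tab_shape : int -> int;
  tab_fill : int -> int -> nat;
  tab_shape_cyl : cylindric n k tab_shape;
  tab_sub : subpart mu tab_shape;
  tab_ssct : ssct n k tab_shape mu t tab_fill }.

(* Marble games: people p_0..p_{k-1} indexed by 'I_k; p_{i+1} = ordS i. *)
Definition arrangement (k : nat) := {ffun 'I_k -> nat}.
Definition turn (k : nat) := {ffun 'I_k -> nat}.

Definition apply_turn (k : nat) (A : arrangement k) (a : turn k) : arrangement k :=
  [ffun i => (A i - a i + a (ord_pred i))%N].

Definition valid_turn (k : nat) (A : arrangement k) (a : turn k) : bool :=
  [forall i, (a i <= A i)%N].

Fixpoint valid_turns (k : nat) (A : arrangement k) (s : seq (turn k)) : Prop :=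
  match s with
  | [::] => True
  | a :: s' => valid_turn A a /\ valid_turns (apply_turn A a) s'
  end.

Record marble_game (n k t : nat) := MarbleGame {
  mg_init : arrangement k;
  mg_turns : seq (turn k);
  mg_total : (\sum_(i < k) mg_init i)%N = (n - k)%N;
  mg_length : size mg_turns = t;
  mg_valid : valid_turns mg_init mg_turns }.

(* Arr(alpha): p_i gets alpha_{i-1} - alpha_i marbles (nonnegative for a
   cylindric partition, so the absolute value is exact). *)
Definition Arr (k : nat) (alpha : int -> int) : arrangement k :=
  [ffun i : 'I_k => absz (alpha (i%:Z - 1)%R - alpha i%:Z)%R].

From mathcomp Require Import all_boot all_order all_algebra zify.
From Stdlib Require Import FunctionalExtensionality ProofIrrelevance.
Import Order.TTheory GRing.Theory Num.Theory.
Set Implicit Arguments. Unset Strict Implicit. Unset Printing Implicit Defensive.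
Local Open Scope ring_scope.

(* A game of length t started at Arr(mu) is the same as a chain of cylindric
   partitions mu = L_0 <= L_1 <= ... <= L_t: turn j + 1 makes person i pass
   L_(j+1)(i) - L_j(i) marbles, and it is valid exactly when the interlacing
   condition L_(j+1)(x + 1) <= L_j(x) holds, i.e. when L_(j+1)/L_j is a
   cylindric horizontal strip.  Writing j + 1 into the boxes of L_(j+1)/L_j
   turns such a chain into a semistandard cylindric tableau of shape L_t/mu
   (interlacing gives strictness along rows), and the chain is recovered from
   the tableau as L_j(x) = mu(x) + #{boxes of column x with entry <= j}. *)

Lemma sum_bool_le N (P : 'I_N -> bool) : (\sum_(i < N) P i <= N)%N.
Proof.
rewrite -[X in (_ <= X)%N]card_ord -sum1_card; apply: leq_sum => i _.
exact: leq_b1.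
Qed.

Lemma sum_bool_all N (P : 'I_N -> bool) :
  (forall i, P i) -> (\sum_(i < N) P i = N)%N.
Proof.
move=> allP; rewrite -[RHS]card_ord -sum1_card.
by apply: eq_bigr => i _; rewrite allP.
Qed.

Lemma sum_ltn N r : (\sum_(j < N) (j < r)%N = minn r N)%N.
Proof.
elim: N => [|N IH]; first by rewrite big_ord0 minn0.
rewrite big_ord_recr /= IH; case: (ltnP N r) => /=; lia.
Qed.

Lemma down_closed_count N (P : nat -> bool) :
    (forall d d', (d' <= d)%N -> (d < N)%N -> P d -> P d') ->
  forall d, (d < N)%N -> P d = (d < \sum_(i < N) P i)%N.
Proof.
elim: N => [|N IH] downP d ltdN //.
rewrite big_ord_recr /=.
have {}IH := IH (fun d d' le_d'd ltdN => downP d d' le_d'd (ltnW ltdN)).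
case PN: (P N).
- have Pd : P d by apply: (downP N) => //; rewrite -ltnS.
  have sum_all : (\sum_(i < N) P i = N)%N.
    by apply: (@sum_bool_all N (fun i => P i)) => i; apply: (downP N) => //; apply: ltnW.
  by rewrite sum_all Pd addn1 ltdN.
- rewrite addn0; case: (ltngtP d N) => [ltdN'|ltNd|->]; [exact: IH | lia |].
  by rewrite PN ltnNge (@sum_bool_le N (fun i => P i)).
Qed.

Lemma eq_of_thresholds (a b f g : int) :
    a <= f <= b -> a <= g <= b ->
    (forall y, a < y <= b -> (y <= f) = (y <= g)) ->
  f = g.
Proof.
move=> /andP[af fb] /andP[ag gb] thr.
case: (ltgtP f g) => // [ltfg|ltgf].
- move: (thr g); rewrite (le_lt_trans af ltfg) gb lexx => /(_ isT).
  by rewrite leNgt ltfg.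
- move: (thr f); rewrite (le_lt_trans ag ltgf) fb lexx => /(_ isT).
  by rewrite leNgt ltgf.
Qed.

Section Residues.
Variables (k : nat) (k_gt0 : (0 < k)%N).

Lemma absz_modz_lt (x : int) : (absz (x %% k)%Z < k)%N.
Proof.
have k_neq0 : k%:Z != 0 by rewrite eqz_nat -lt0n.
have := modz_ge0 x k_neq0; have := ltz_mod x k_neq0; lia.
Qed.

Definition modk (x : int) : 'I_k := Ordinal (absz_modz_lt x).

Lemma modkE x : (modk x)%:Z = (x %% k)%Z.
Proof. by rewrite /= gez0_abs // modz_ge0 // eqz_nat -lt0n. Qed.

Lemma modkDk x : modk (x + k%:Z) = modk x.
Proof. by apply: val_inj; rewrite /= modzDr. Qed.

Lemma modk_ord (i : 'I_k) : modk i%:Z = i.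
Proof. by apply: val_inj; rewrite /= modz_small // ltz_nat ltn_ord. Qed.

Lemma modk_pred (i : 'I_k) : modk (i%:Z - 1) = ord_pred i.
Proof.
apply: val_inj => /=.
have -> : i%:Z - 1 = ((i + k).-1)%N%:Z - k%:Z by have := ltn_ord i; lia.
by rewrite -modzDr subrK modz_nat.
Qed.

Lemma shift_invariant_modk (Q : int -> Prop) :
  (forall z, Q (z + k%:Z) <-> Q z) -> forall z, Q z <-> Q (modk z)%:Z.
Proof.
move=> QDk z; rewrite modkE.
have QDmk (m : nat) r : Q (r + m%:Z * k%:Z) <-> Q r.
  elim: m r => [|m IH] r; first by rewrite mul0r addr0.
  have -> : r + m.+1%:Z * k%:Z = (r + m%:Z * k%:Z) + k%:Z by lia.
  by rewrite QDk.
rewrite {1}(divz_eq z k) addrC; case: (z %/ k)%Z => m; first exact: QDmk.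
set r := (z %% k)%Z.
have -> : r + Negz m * k%:Z = r - m.+1%:Z * k%:Z by rewrite NegzE; lia.
by rewrite -(QDmk m.+1 (r - _)) subrK.
Qed.

End Residues.

Definition nonincreasing (L : int -> int) := forall x, L (x + 1) <= L x.

Lemma nonincreasing_le L : nonincreasing L -> forall x x', x <= x' -> L x' <= L x.
Proof.
move=> Ldecr x x' le_xx'.
have LDn (m : nat) : L (x + m%:Z) <= L x.
  elim: m => [|m IH]; first by rewrite addr0.
  have := Ldecr (x + m%:Z); rewrite -addrA -PoszD addn1 => /le_trans; exact.
have -> : x' = x + (absz (x' - x))%:Z by lia.
exact: LDn.
Qed.

Section Turns.
Variables (n k : nat) (k_gt0 : (0 < k)%N).

Definition quasi_periodic (L : int -> int) :=
  forall x, L x = L (x + k%:Z) + (n%:Z - k%:Z).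

Definition is_increment (a : turn k) (L L' : int -> int) :=
  forall i : 'I_k, (a i)%:Z = L' i%:Z - L i%:Z.

Lemma quasi_periodicN L : quasi_periodic L ->
  forall x, L (x - k%:Z) = L x + (n%:Z - k%:Z).
Proof. by move=> Lper x; rewrite (Lper (x - k%:Z)) subrK. Qed.

Lemma eq_Arr L L' : (forall x, L x = L' x) -> Arr k L = Arr k L'.
Proof. by move=> eqL; apply/ffunP => i; rewrite !ffunE !eqL. Qed.

Section Increment.
Variables (L L' : int -> int) (a : turn k).
Hypotheses (Lper : quasi_periodic L) (L'per : quasi_periodic L')
  (a_inc : is_increment a L L').

Lemma is_increment_modk x : (a (modk k_gt0 x))%:Z = L' x - L x.
Proof.
apply/(@shift_invariant_modk _ k_gt0 (fun x => (a (modk k_gt0 x))%:Z = L' x - L x)).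
  by move=> z; rewrite modkDk (Lper z) (L'per z); split=> ->; lia.
by rewrite modk_ord a_inc.
Qed.

Hypothesis Ldecr : nonincreasing L.

Lemma valid_turn_Arr : valid_turn (Arr k L) a <-> forall x, L' (x + 1) <= L x.
Proof.
have validE (i : 'I_k) : (a i <= Arr k L i)%N = (L' i%:Z <= L (i%:Z - 1)).
  rewrite ffunE; have := Ldecr (i%:Z - 1); rewrite subrK; have := a_inc i.
  by move=> ai Li; apply/idP/idP; lia.
split=> [/forallP valid_a x | interlace]; last first.
  by apply/forallP => i; rewrite validE; have := interlace (i%:Z - 1); rewrite subrK.
pose Q z := L' z <= L (z - 1).
have QDk z : Q (z + k%:Z) <-> Q z.
  rewrite /Q (L'per z) (Lper (z - 1)).
  have -> : z + k%:Z - 1 = z - 1 + k%:Z by lia.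
  by split; lia.
have := proj2 (shift_invariant_modk k_gt0 QDk (x + 1)).
by rewrite /Q addrK; apply; rewrite -validE.
Qed.

Lemma apply_turn_Arr : valid_turn (Arr k L) a -> apply_turn (Arr k L) a = Arr k L'.
Proof.
move=> /forallP valid_a; apply/ffunP => i; rewrite !ffunE.
have := valid_a i; rewrite ffunE.
have := is_increment_modk (i%:Z - 1); rewrite modk_pred.
have := a_inc i; have := Ldecr (i%:Z - 1); rewrite subrK.
move=> Li ai api ai_le; apply/eqP; rewrite -eqz_nat; apply/eqP; lia.
Qed.

End Increment.

Definition turn0 : turn k := [ffun=> 0%N].

Lemma valid_turns_Arr (s : seq (turn k)) (L : nat -> int -> int) :
    (forall j, quasi_periodic (L j)) -> nonincreasing (L 0%N) ->
    (forall j x, L j x <= L j.+1 x) ->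
    (forall j, (j < size s)%N -> is_increment (nth turn0 s j) (L j) (L j.+1)) ->
  valid_turns (Arr k (L 0%N)) s <->
  (forall j, (j < size s)%N -> forall x, L j.+1 (x + 1) <= L j x).
Proof.
elim: s L => [|a s IH] L Lper L0decr Lmono Linc //=.
have a_inc : is_increment a (L 0%N) (L 1%N) by apply: (Linc 0%N).
have validE := valid_turn_Arr (Lper 0%N) (Lper 1%N) a_inc L0decr.
have L1decr : (forall x, L 1%N (x + 1) <= L 0%N x) -> nonincreasing (L 1%N).
  by move=> interlace x; apply: le_trans (interlace x) (Lmono 0%N x).
have {}IH interlace := IH (fun j => L j.+1) (fun j => Lper j.+1) (L1decr interlace)
  (fun j => Lmono j.+1) (fun j => Linc j.+1).
split=> [[valid_a valid_s] | interlace].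
  have interlace0 := proj1 validE valid_a.
  rewrite (apply_turn_Arr (Lper 0%N) (Lper 1%N) a_inc L0decr valid_a) in valid_s.
  by case=> [|j] //; apply: (proj1 (IH interlace0) valid_s).
have valid_a := proj2 validE (interlace 0%N isT); split=> //.
rewrite (apply_turn_Arr (Lper 0%N) (Lper 1%N) a_inc L0decr valid_a).
by apply/(IH (interlace 0%N isT)) => j; apply: (interlace j.+1).
Qed.

Lemma sum_Arr (mu : int -> int) : cylindric n k mu -> (k <= n)%N ->
  (\sum_(i < k) Arr k mu i)%N = (n - k)%N.
Proof.
move=> [mu_decr mu_per] le_kn.
have telescope m : (m <= k)%N ->
    ((\sum_(i < m) absz (mu (i%:Z - 1) - mu i%:Z)%R)%N)%:Z = mu (-1) - mu (m%:Z - 1).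
  elim: m => [|m IH] le_mk; first by rewrite big_ord0 subrr.
  rewrite big_ord_recr /= PoszD IH ?(ltnW le_mk) //.
  have := mu_decr (m%:Z - 1); rewrite subrK.
  have -> : m.+1%:Z - 1 = m%:Z by lia.
  lia.
rewrite (eq_bigr (fun i : 'I_k => absz (mu (i%:Z - 1) - mu i%:Z)%R)); last first.
  by move=> i _; rewrite ffunE.
apply/eqP; rewrite -eqz_nat telescope //.
have := mu_per (-1); rewrite (_ : -1 + k%:Z = k%:Z - 1); lia.
Qed.

End Turns.

Section Chains.
Variables (n k : nat) (mu : int -> int).
Hypothesis mu_cyl : cylindric n k mu.

(* The box (x, y) gets the index j + 1 of the first L_(j+1) containing it. *)
Definition chain_fill (L : nat -> int -> int) (t : nat) (x y : int) : nat :=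
  if in_skew (L t) mu x y then (\sum_(j < t) ((L j x < y)%R : nat))%N else 0%N.

Lemma eq_chain_fill (L L' : nat -> int -> int) t :
    (forall j x, (j <= t)%N -> L j x = L' j x) ->
  chain_fill L t = chain_fill L' t.
Proof.
move=> eqL; apply: functional_extensionality => x.
apply: functional_extensionality => y.
have eqLt : L t = L' t by apply: functional_extensionality => z; apply: eqL.
rewrite /chain_fill eqLt; case: ifP => // _.
by apply: eq_bigr => j _; rewrite eqL // ltnW.
Qed.

Section Chain.
Variables (L : nat -> int -> int) (t : nat).
Hypotheses (L0 : forall x, L 0%N x = mu x)
  (Lper : forall j, quasi_periodic n k (L j))
  (Lmono : forall j x, L j x <= L j.+1 x)
  (Linterlace : forall j, (j < t)%N -> forall x, L j.+1 (x + 1) <= L j x).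

Lemma chain_le j j' x : (j <= j')%N -> L j x <= L j' x.
Proof.
move=> le_jj'; rewrite -(subnKC le_jj').
elim: (j' - j)%N => [|m IH]; first by rewrite addn0.
by rewrite addnS; apply: le_trans IH (Lmono _ _).
Qed.

Lemma chain_nonincreasing j : (j <= t)%N -> nonincreasing (L j).
Proof.
case: j => [|j] le_jt x; first by rewrite !L0; apply: (proj1 mu_cyl).
exact: le_trans (Linterlace le_jt x) (Lmono _ _).
Qed.

Lemma chain_cylindric : cylindric n k (L t).
Proof. by split; [apply: chain_nonincreasing | apply: Lper]. Qed.

Lemma chain_subpart : subpart mu (L t).
Proof. by move=> x; rewrite -L0; apply: chain_le. Qed.

Lemma chain_fill_shift x y :
  chain_fill L t (x - k%:Z) (y + (n%:Z - k%:Z)) = chain_fill L t x y.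
Proof.
rewrite /chain_fill /in_skew !(quasi_periodicN (Lper t)).
rewrite (quasi_periodicN (proj2 mu_cyl)) !lerD2r; case: ifP => // _.
by apply: eq_bigr => j _; rewrite (quasi_periodicN (Lper j)) ltrD2r.
Qed.

Lemma chain_fill_range x y :
  in_skew (L t) mu x y -> (1 <= chain_fill L t x y <= t)%N.
Proof.
rewrite /chain_fill => skew_xy; rewrite skew_xy.
case/andP: skew_xy => y_in y_out.
case: t y_in => [|t'] y_in; first by move: y_out; rewrite -L0 y_in.
rewrite big_ord_recl /= L0 ltNge y_out add1n ltnS.
exact: (@sum_bool_le t' (fun j => L (bump 0 j) x < y)).
Qed.

Lemma chain_fill_col x y1 y2 :
    in_skew (L t) mu x y1 -> in_skew (L t) mu x y2 -> y1 < y2 ->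
  (chain_fill L t x y1 <= chain_fill L t x y2)%N.
Proof.
rewrite /chain_fill => -> -> lt_y12; apply: leq_sum => j _.
by case: (L j x < y1) /idP => //= /lt_trans/(_ lt_y12) ->.
Qed.

(* Interlacing makes L_(j+1)(x2) <= L_j(x1) for x1 < x2, so column x2 lags a
   full step behind column x1. *)
Lemma chain_fill_row x1 x2 y :
    in_skew (L t) mu x1 y -> in_skew (L t) mu x2 y -> x1 < x2 ->
  (chain_fill L t x1 y < chain_fill L t x2 y)%N.
Proof.
rewrite /chain_fill => skew1 skew2 lt_x12; rewrite skew1 skew2.
have lag j : (j < t)%N -> L j.+1 x2 <= L j x1.
  move=> lt_jt; apply: le_trans (Linterlace lt_jt x1).
  by apply: (nonincreasing_le (@chain_nonincreasing j.+1 lt_jt)); lia.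
case/andP: skew2 => y_in2 y_out2.
case: t lag skew1 y_in2 => [|t'] lag skew1 y_in2.
  by move: skew1; rewrite /in_skew L0 andbN.
rewrite [X in (X < _)%N]big_ord_recr [X in (_ < X)%N]big_ord_recl /= L0.
rewrite [mu x2 < y]ltNge y_out2 /= ltNge (le_trans y_in2 (lag t' (ltnSn _))).
rewrite addn0 add1n ltnS; apply: leq_sum => j _.
by case: (L j x1 < y) /idP => //= /(le_lt_trans (lag j (ltnW (ltn_ord j)))) ->.
Qed.

Lemma chain_ssct : ssct n k (L t) mu t (chain_fill L t).
Proof.
split; [exact: chain_fill_shift | | exact: chain_fill_range
       | exact: chain_fill_col | exact: chain_fill_row].
by move=> x y; rewrite /chain_fill => /negbTE ->.
Qed.

Lemma chain_le_fill j x y : (j <= t)%N -> in_skew (L t) mu x y ->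
  (y <= L j x) = (chain_fill L t x y <= j)%N.
Proof.
rewrite leq_eqVlt => /orP[/eqP-> | lt_jt] skew_xy.
  by have /andP[_ ->] := chain_fill_range skew_xy; case/andP: skew_xy.
have down d d' : (d' <= d)%N -> (d < t)%N -> L d x < y -> L d' x < y.
  by move=> le_d'd _; apply: le_lt_trans (chain_le x le_d'd).
by rewrite /chain_fill skew_xy leNgt (down_closed_count down lt_jt) ltnNge negbK.
Qed.

End Chain.
End Chains.

Section Tableaux.
Variables (n k : nat) (mu : int -> int).
Hypothesis mu_cyl : cylindric n k mu.

Section TableauChain.
Variables (t : nat) (lam : int -> int) (R : int -> int -> nat).
Hypotheses (lam_cyl : cylindric n k lam) (mu_sub : subpart mu lam)
  (R_ssct : ssct n k lam mu t R).

Definition col_len (x : int) : nat := absz (lam x - mu x).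

(* The boxes of column x are the points (x, mu x + d + 1) with d < col_len x. *)
Definition col_count (j : nat) (x : int) : nat :=
  (\sum_(d < col_len x) (R x (mu x + d%:Z + 1) <= j)%N)%N.

Definition tab_chain (j : nat) (x : int) : int := mu x + (col_count j x)%:Z.

Lemma col_len_skew x (d : nat) :
  (d < col_len x)%N -> in_skew lam mu x (mu x + d%:Z + 1).
Proof.
move=> lt_d; have := mu_sub x; rewrite /col_len in lt_d.
by move=> le_mu; apply/andP; split; lia.
Qed.

Lemma tab_chain_quasi_periodic j : quasi_periodic n k (tab_chain j).
Proof.
have [R_shift _ _ _ _] := R_ssct.
move=> x; rewrite /tab_chain /col_count /col_len.
have := proj2 lam_cyl x; have := proj2 mu_cyl x => mu_per lam_per.
have -> : lam x - mu x = lam (x + k%:Z) - mu (x + k%:Z) by lia.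
set N := absz _.
have -> : (\sum_(d < N) (R x (mu x + d%:Z + 1) <= j))%N =
    (\sum_(d < N) (R (x + k%:Z) (mu (x + k%:Z) + d%:Z + 1) <= j))%N.
  apply: eq_bigr => d _; rewrite -(R_shift (x + k%:Z)) addrK.
  by congr (R _ _ <= _)%N; lia.
lia.
Qed.

Lemma tab_chain_le_fill j x y :
  in_skew lam mu x y -> (y <= tab_chain j x) = (R x y <= j)%N.
Proof.
case/andP=> y_in y_out; have [_ _ _ R_col _] := R_ssct.
have down d d' : (d' <= d)%N -> (d < col_len x)%N ->
    (R x (mu x + d%:Z + 1) <= j)%N -> (R x (mu x + d'%:Z + 1) <= j)%N.
  rewrite leq_eqVlt => /orP[/eqP-> //|lt_d'd] lt_d /(leq_trans _); apply.
  by apply: R_col; [apply: col_len_skew; lia | exact: col_len_skew | lia].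
have lt_y : (absz (y - mu x - 1)%R < col_len x)%N by rewrite /col_len; lia.
have := down_closed_count down lt_y.
have -> : mu x + (absz (y - mu x - 1)%R)%:Z + 1 = y by lia.
by move=> ->; rewrite /tab_chain /col_count; apply/idP/idP; lia.
Qed.

Lemma tab_chain0 x : tab_chain 0 x = mu x.
Proof.
have [_ _ R_range _ _] := R_ssct.
rewrite /tab_chain /col_count big1 ?addr0 // => d _.
by have := R_range _ _ (col_len_skew (ltn_ord d)); case: (R _ _).
Qed.

Lemma tab_chain_le_shape j x : tab_chain j x <= lam x.
Proof.
have := @sum_bool_le (col_len x) (fun d => R x (mu x + d%:Z + 1) <= j)%N.
by have := mu_sub x; rewrite /tab_chain /col_count /col_len; lia.
Qed.

Lemma tab_chain_top x : tab_chain t x = lam x.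
Proof.
have [_ _ R_range _ _] := R_ssct.
rewrite /tab_chain /col_count sum_bool_all => [|d].
  by have := mu_sub x; rewrite /col_len; lia.
by case/andP: (R_range _ _ (col_len_skew (ltn_ord d))).
Qed.

Lemma tab_chain_mono j x : tab_chain j x <= tab_chain j.+1 x.
Proof.
rewrite lerD2l lez_nat; apply: leq_sum => d _.
by case: (R _ _ <= j)%N /idP => //= /leq_trans ->.
Qed.

Lemma tab_chain_interlace j x : tab_chain j.+1 (x + 1) <= tab_chain j x.
Proof.
have [_ _ _ _ R_row] := R_ssct.
rewrite leNgt; apply/negP => lt_y; set y := tab_chain j.+1 (x + 1) in lt_y.
have mu_le : mu x <= tab_chain j x by rewrite lerDl.
have skew1 : in_skew lam mu (x + 1) y.
  rewrite /in_skew tab_chain_le_shape -ltNge.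
  exact: le_lt_trans (proj1 mu_cyl x) (le_lt_trans mu_le lt_y).
have skew0 : in_skew lam mu x y.
  rewrite /in_skew -ltNge (le_lt_trans mu_le lt_y) andbT.
  exact: le_trans (tab_chain_le_shape j.+1 (x + 1)) (proj1 lam_cyl x).
have R1 : (R (x + 1) y <= j.+1)%N by rewrite -(tab_chain_le_fill _ skew1).
have R0 : ~~ (R x y <= j)%N by rewrite -(tab_chain_le_fill _ skew0) -ltNge.
by have := R_row _ _ _ skew0 skew1 (ltrDl _ _); lia.
Qed.

Lemma chain_fill_tab_chain : chain_fill mu tab_chain t = R.
Proof.
have [_ R_out R_range _ _] := R_ssct.
apply: functional_extensionality => x; apply: functional_extensionality => y.
rewrite /chain_fill.
have -> : tab_chain t = lam by apply: functional_extensionality; exact: tab_chain_top.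
case: ifP => [skew_xy|/negbT/R_out //].
rewrite (eq_bigr (fun j : 'I_t => (j < R x y)%N : nat)) => [|j _].
  by rewrite sum_ltn; have := R_range _ _ skew_xy; lia.
by rewrite ltNge tab_chain_le_fill // ltnNge.
Qed.

Definition tab_turns : seq (turn k) :=
  mkseq (fun j => [ffun i : 'I_k => (col_count j.+1 i - col_count j i)%N]) t.

Lemma size_tab_turns : size tab_turns = t.
Proof. exact: size_mkseq. Qed.

Lemma tab_turns_increment j : (j < t)%N ->
  is_increment (nth (turn0 k) tab_turns j) (tab_chain j) (tab_chain j.+1).
Proof.
move=> lt_jt i; rewrite nth_mkseq // ffunE.
by have := tab_chain_mono j i; rewrite /tab_chain; lia.
Qed.

End TableauChain.

Lemma tab_chain_of_chain (L : nat -> int -> int) t j x :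
    (forall x, L 0%N x = mu x) -> (forall j, quasi_periodic n k (L j)) ->
    (forall j x, L j x <= L j.+1 x) ->
    (forall j, (j < t)%N -> forall x, L j.+1 (x + 1) <= L j x) ->
  (j <= t)%N -> tab_chain (L t) (chain_fill mu L t) j x = L j x.
Proof.
move=> L0 Lper Lmono Linterlace le_jt.
have R_ssct := chain_ssct mu_cyl L0 Lper Lmono Linterlace.
have mu_sub : subpart mu (L t) := chain_subpart _ L0 Lmono.
apply: (@eq_of_thresholds (mu x) (L t x)).
- by rewrite (tab_chain_le_shape _ mu_sub) /tab_chain lerDl le0z_nat.
- by rewrite -{1}L0 !chain_le.
- move=> y y_skew; have skew_xy : in_skew (L t) mu x y by rewrite /in_skew -ltNge andbC.
  by rewrite (tab_chain_le_fill mu_sub R_ssct) // (chain_le_fill L0 Lmono le_jt skew_xy).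
Qed.

End Tableaux.

Section Games.
Variables (n k : nat) (k_gt0 : (0 < k)%N) (mu : int -> int).
Hypothesis mu_cyl : cylindric n k mu.

Section GameChain.
Variable s : seq (turn k).

Definition game_chain (j : nat) (x : int) : int :=
  mu x + (\sum_(l < j) nth (turn0 k) s l (modk k_gt0 x))%:Z.

Lemma game_chain0 x : game_chain 0 x = mu x.
Proof. by rewrite /game_chain big_ord0 addr0. Qed.

Lemma game_chainS j x :
  game_chain j.+1 x = game_chain j x + (nth (turn0 k) s j (modk k_gt0 x))%:Z.
Proof. by rewrite /game_chain big_ord_recr /= PoszD addrA. Qed.

Lemma game_chain_quasi_periodic j : quasi_periodic n k (game_chain j).
Proof. by move=> x; rewrite /game_chain modkDk (proj2 mu_cyl x); lia. Qed.

Lemma game_chain_mono j x : game_chain j x <= game_chain j.+1 x.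
Proof. by rewrite game_chainS lerDl. Qed.

Lemma game_chain_increment j :
  is_increment (nth (turn0 k) s j) (game_chain j) (game_chain j.+1).
Proof. by move=> i; rewrite game_chainS modk_ord addrC addKr. Qed.

Lemma valid_turns_game_chain : valid_turns (Arr k mu) s <->
  (forall j, (j < size s)%N -> forall x, game_chain j.+1 (x + 1) <= game_chain j x).
Proof.
rewrite -(@eq_Arr _ (game_chain 0)) => [|x]; last exact: game_chain0.
apply: (valid_turns_Arr k_gt0).
- exact: game_chain_quasi_periodic.
- by move=> x; rewrite !game_chain0; apply: (proj1 mu_cyl).
- exact: game_chain_mono.
- by move=> j _; apply: game_chain_increment.
Qed.

End GameChain.

Section TableauGame.
Variables (t : nat) (lam : int -> int) (R : int -> int -> nat).
Hypotheses (lam_cyl : cylindric n k lam) (mu_sub : subpart mu lam)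
  (R_ssct : ssct n k lam mu t R).

Local Notation turns := (tab_turns k mu t lam R).
Local Notation chain := (tab_chain mu lam R).

Lemma game_chain_tab_turns j x : (j <= t)%N -> game_chain turns j x = chain j x.
Proof.
have chain_per := tab_chain_quasi_periodic mu_cyl lam_cyl R_ssct.
elim: j x => [|j IH] x le_jt; first by rewrite game_chain0 (tab_chain0 mu_sub R_ssct).
have := is_increment_modk k_gt0 (game_chain_quasi_periodic turns j)
  (game_chain_quasi_periodic _ j.+1) (game_chain_increment _ j) x.
have := is_increment_modk k_gt0 (chain_per j) (chain_per j.+1)
  (tab_turns_increment _ _ _ le_jt) x.
by have := IH x (ltnW le_jt); lia.
Qed.

Lemma valid_tab_turns : valid_turns (Arr k mu) turns.
Proof.
apply/valid_turns_game_chain => j; rewrite size_tab_turns => lt_jt x.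
rewrite !game_chain_tab_turns ?(ltnW lt_jt) //.
exact: (tab_chain_interlace mu_cyl lam_cyl mu_sub R_ssct).
Qed.

Lemma tab_turns_shape : game_chain turns t = lam.
Proof.
apply: functional_extensionality => x.
by rewrite game_chain_tab_turns // (tab_chain_top mu_sub R_ssct).
Qed.

Lemma tab_turns_fill : chain_fill mu (game_chain turns) t = R.
Proof.
rewrite -[RHS](chain_fill_tab_chain mu_sub R_ssct).
by apply: eq_chain_fill => j x; apply: game_chain_tab_turns.
Qed.

End TableauGame.

Lemma tab_turns_game_chain (s : seq (turn k)) t :
    valid_turns (Arr k mu) s -> size s = t ->
  tab_turns k mu t (game_chain s t) (chain_fill mu (game_chain s) t) = s.
Proof.
move=> valid_s size_s.
have chainE j x : (j <= t)%N ->
    tab_chain mu (game_chain s t) (chain_fill mu (game_chain s) t) j x = game_chain s j x.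
  apply: (tab_chain_of_chain mu_cyl).
  - exact: game_chain0.
  - exact: game_chain_quasi_periodic.
  - exact: game_chain_mono.
  - by rewrite -size_s; apply/valid_turns_game_chain.
apply: (@eq_from_nth _ (turn0 k)) => [|j]; first by rewrite size_tab_turns.
rewrite size_tab_turns => lt_jt; apply/ffunP => i; apply/eqP; rewrite -eqz_nat.
rewrite (tab_turns_increment _ _ _ lt_jt) !chainE ?(ltnW lt_jt) //.
by rewrite -game_chain_increment.
Qed.

Section Bijection.
Variables (t : nat) (le_kn : (k <= n)%N).

Local Notation game := {g : marble_game n k t | mg_init g = Arr k mu}.

Lemma game_valid (G : game) : valid_turns (Arr k mu) (mg_turns (sval G)).
Proof. by have := mg_valid (sval G); rewrite (svalP G). Qed.

Lemma game_interlace (G : game) j : (j < t)%N ->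
  forall x, game_chain (mg_turns (sval G)) j.+1 (x + 1)
            <= game_chain (mg_turns (sval G)) j x.
Proof.
have := proj1 (valid_turns_game_chain _) (game_valid G) j.
by rewrite (mg_length (sval G)); apply.
Qed.

Definition game_tableau (G : game) : tableau n k mu t :=
  let s := mg_turns (sval G) in
  Tableau (chain_cylindric mu_cyl (game_chain0 s) (game_chain_quasi_periodic s)
             (game_chain_mono s) (game_interlace G))
    (chain_subpart t (game_chain0 s) (game_chain_mono s))
    (chain_ssct mu_cyl (game_chain0 s) (game_chain_quasi_periodic s)
       (game_chain_mono s) (game_interlace G)).

Definition tableau_game (T : tableau n k mu t) : game :=
  let turns := tab_turns k mu t (tab_shape T) (tab_fill T) in
  exist _ (@MarbleGame n k t (Arr k mu) turns (sum_Arr k_gt0 mu_cyl le_kn)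
             (size_tab_turns k mu t _ _)
             (valid_tab_turns (tab_shape_cyl T) (tab_sub T) (tab_ssct T))) erefl.

Lemma tableau_eq (T1 T2 : tableau n k mu t) :
  tab_shape T1 = tab_shape T2 -> tab_fill T1 = tab_fill T2 -> T1 = T2.
Proof.
case: T1 T2 => [lam1 R1 ? ? ?] [lam2 R2 ? ? ?] /= eq_lam eq_R; subst.
by f_equal; apply: proof_irrelevance.
Qed.

Lemma marble_game_eq (g1 g2 : marble_game n k t) :
  mg_init g1 = mg_init g2 -> mg_turns g1 = mg_turns g2 -> g1 = g2.
Proof.
case: g1 g2 => [A1 s1 ? ? ?] [A2 s2 ? ? ?] /= eq_A eq_s; subst.
by f_equal; apply: proof_irrelevance.
Qed.

Lemma game_eq (G1 G2 : game) : mg_turns (sval G1) = mg_turns (sval G2) -> G1 = G2.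
Proof.
case: G1 G2 => [g1 eq_A1] [g2 eq_A2] /= eq_s.
by apply: subset_eq_compat; apply: marble_game_eq; rewrite ?eq_A1 ?eq_A2.
Qed.

Lemma game_tableauK : cancel game_tableau tableau_game.
Proof.
move=> G; apply: game_eq => /=.
exact: tab_turns_game_chain (game_valid G) (mg_length _).
Qed.

Lemma tableau_gameK : cancel tableau_game game_tableau.
Proof.
move=> [lam R lam_cyl mu_sub R_ssct]; apply: tableau_eq => /=.
  exact: tab_turns_shape.
exact: tab_turns_fill.
Qed.

End Bijection.

End Games.

Theorem mainTheorem8 (n k : nat) (hk : (1 <= k)%N) (hkn : (k < n)%N)
    (mu : int -> int) (hmu : cylindric n k mu) (t : nat) :
  exists f : {g : marble_game n k t | mg_init g = Arr k mu} -> tableau n k mu t,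
    bijective f.
Proof.
exists (@game_tableau n k hk mu hmu t), (tableau_game hk hmu (ltnW hkn)).
  exact: game_tableauK.
exact: tableau_gameK.
Qed.
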